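(* Let $n\ge2$, let $A=(a_{ij})$ be an $n\times n$ nonnegative irreducible matrix and $c=(c_1,\dots,c_n)^T$ a vector with all components positive. For $1\le i\le n$ put \[M_i=\frac{1}{c_i}\sum_{j=1}^n a_{ij}c_j,\qquad S=\min_{1\le i\le n}a_{ii},\qquad T=\min_{i\ne j}\frac{a_{ij}c_j}{c_i},\] and assume $M_1\ge M_2\ge\cdots\ge M_n$. Then \[\rho(A)\ge \frac{M_n+S-T+\sqrt{(M_n-S+T)^2+4T\sum_{k=1}^{n-1}(M_k-M_n)}}{2}.\] Equality holds if and only if $M_1=\cdots=M_n$, or $T>0$ and for some $2\le t\le n$: (i) $a_{kk}=S$ for $1\le k\le t-1$; (ii) $\frac{a_{kl}c_l}{c_k}=T$ for all $1\le k\le n$, $1\le l\le t-1$, $k\ne l$; (iii) $M_t=\cdots=M_n$.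
   Context: $\rho(A)$ denotes the spectral radius of $A$. *)

(* Matrices over an arbitrary numClosedFieldType C (e.g. the
   complex numbers); a nonnegative matrix has entries 0 <= a_ij (hence real). *)
From HB Require Import structures.
From mathcomp Require Import all_boot all_order all_algebra.
Set Implicit Arguments. Unset Strict Implicit. Unset Printing Implicit Defensive.
Import Order.TTheory GRing.Theory Num.Theory.
Local Open Scope ring_scope.

(* The eigenvalues of A (with multiplicity): the roots of the characteristic
   polynomial, which splits since C is algebraically closed. *)
Definition eigenvalues_seq (C : numClosedFieldType) (n : nat) (A : 'M[C]_n)
  : seq C := sval (closed_field_poly_normal (char_poly A)).

Definition spectral_radius (C : numClosedFieldType) (n : nat) (A : 'M[C]_n)
  : C := \big[Num.max/0]_(z <- eigenvalues_seq A) `|z|.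

Definition nonneg_mx (C : numClosedFieldType) (n : nat) (A : 'M[C]_n) : Prop :=
  forall i j, 0 <= A i j.

(* Irreducible: there is no nonempty proper index set I with a_ij = 0 for all
   i in I, j not in I (i.e. A is not permutation-similar to a block
   triangular matrix). *)
Definition irreducible_mx (C : numClosedFieldType) (n : nat) (A : 'M[C]_n)
  : Prop :=
  forall I : {set 'I_n}, I != set0 -> I != setT ->
    exists i j, [/\ i \in I, j \notin I & A i j != 0].

Definition Mrow (C : numClosedFieldType) (n : nat) (A : 'M[C]_n)
  (c : 'I_n -> C) (i : 'I_n) : C := (\sum_j A i j * c j) / c i.

From HB Require Import structures.
From mathcomp Require Import all_boot all_order all_algebra.
From mathcomp Require Import ring.
Import Order.TTheory GRing.Theory Num.Theory Num.Def.
Set Implicit Arguments. Unset Strict Implicit. Unset Printing Implicit Defensive.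
Local Open Scope ring_scope.

(* Let b_ij = a_ij c_j / c_i, d_j = M_j - M_n >= 0 and let beta be the bound
   of the theorem, the larger root of (x - M_n)(x - S + T) = T sum_j d_j;
   put g = beta - S + T > 0.  For the test vector y_j = c_j (1 + d_j / g)
   one computes  (A y - beta y)_i = c_i / g * sum_j (b_ij - t_ij) d_j >= 0,
   where t_ij is S on the diagonal and T elsewhere.  Two Collatz-Wielandt
   type facts then give the theorem:
   - if A y >= beta y with y > 0, A has a real eigenvalue >= beta, strictly
     larger when the inequality is strict somewhere and A is irreducible;
   - if A y <= mu y with y > 0, every eigenvalue has modulus <= mu.
   Hence rho(A) >= beta, with equality iff A y = beta y, i.e. iff every term
   (b_ij - t_ij) d_j vanishes, which unfolds into the stated pattern.
   Without analysis at hand, the existence of a real eigenvalue is proved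
   algebraically: the adjugate vector adj(s I - A) y, followed from a large
   real s down to beta, keeps its sign by an intermediate value property of
   real polynomials proved by splitting off linear and quadratic factors. *)

Lemma seq_max (R : numDomainType) (s : seq R) :
  all (mem Num.real) s -> s != [::] ->
  exists2 x, x \in s & forall y, y \in s -> y <= x.
Proof.
elim: s => [|a s IH] //= /andP[ra rs] _.
have [->|sn0] := eqVneq s [::].
  by exists a => [|y]; rewrite ?mem_seq1 // => /eqP->.
have [x xs xmax] := IH rs sn0.
have [ax|xa] := real_leP ra (allP rs x xs).
  by exists x => [|y]; rewrite inE ?xs ?orbT // => /orP[/eqP->|/xmax].
exists a => [|y]; rewrite inE ?eqxx // => /orP[/eqP->//|/xmax yx].
exact: le_trans yx (ltW xa).
Qed.

Lemma fin_max (R : numDomainType) (n : nat) (f : 'I_n.+1 -> R) :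
  (forall i, f i \is Num.real) -> exists i, forall j, f j <= f i.
Proof.
move=> rf; have real_f : all (mem Num.real) (map f (enum 'I_n.+1)).
  by apply/allP => x /mapP[i _ ->]; apply: rf.
have [|x /mapP[i _ ->] imax] := seq_max real_f.
  by rewrite -size_eq0 size_map size_enum_ord.
by exists i => j; apply/imax/map_f; rewrite mem_enum.
Qed.

Lemma fin_min (R : numDomainType) (n : nat) (f : 'I_n.+1 -> R) :
  (forall i, f i \is Num.real) -> exists i, forall j, f i <= f j.
Proof.
move=> rf; have [i imax] := @fin_max R n (fun i => - f i)
  (fun i => ltac:(by rewrite realN)).
by exists i => j; rewrite -lerN2.
Qed.

Lemma sqr_real_gt0 (R : numDomainType) (x : R) :
  x \is Num.real -> x != 0 -> 0 < x * x.
Proof. by move=> rx nx; rewrite -expr2 -real_normK // exprn_gt0 // normr_gt0. Qed.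

Lemma sign_transfer (R : numDomainType) (a m q : R) :
  m \is Num.real -> 0 <= a * m -> 0 < m * q -> 0 <= a * q.
Proof.
move=> rm am mq; have mn0 : m != 0 by apply: contraTneq mq => ->; rewrite mul0r ltxx.
rewrite -(pmulr_lge0 _ (sqr_real_gt0 rm mn0)).
have -> : a * q * (m * m) = (a * m) * (m * q) by ring.
by rewrite mulr_ge0 // ltW.
Qed.

Section RealPolynomials.
Variable C : numClosedFieldType.
Implicit Types (q h : {poly C}) (a b w x : C).

Definition real_poly q : Prop := map_poly conjC q = q.

Lemma real_poly_horner q x :
  real_poly q -> x \is Num.real -> q.[x] \is Num.real.
Proof. by move=> rq rx; apply/CrealP; rewrite -horner_map /= rq conj_Creal. Qed.

Lemma real_poly_XsubC w : w \is Num.real -> real_poly ('X - w%:P).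
Proof. by move=> rw; rewrite /real_poly map_polyXsubC /= conj_Creal. Qed.

Lemma real_poly_divl q h :
  real_poly (q * h) -> real_poly h -> h != 0 -> real_poly q.
Proof.
by rewrite /real_poly rmorphM /= => E rh hn0; apply: (mulIf hn0); rewrite -{1}rh.
Qed.

Lemma linear_factor_sign a b w :
  a \is Num.real -> b \is Num.real -> w \is Num.real -> a <= b ->
  (forall x, a <= x -> x <= b -> x != w) -> 0 < (a - w) * (b - w).
Proof.
move=> ra rb rw ab noroot.
have [wa|aw] := real_ltP rw ra.
  by rewrite mulr_gt0 // subr_gt0 // (lt_le_trans wa ab).
have [bw|wb] := real_ltP rb rw; last by have := noroot w aw wb; rewrite eqxx.
by rewrite -mulrNN mulr_gt0 // oppr_gt0 subr_lt0 // (le_lt_trans ab bw).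
Qed.

Lemma conj_pair_gt0 w x :
  w \isn't Num.real -> x \is Num.real -> 0 < (x - w^*) * (x - w).
Proof.
move=> nrw rx; rewrite -{1}(conj_Creal rx) -rmorphB /= mulrC -normCK.
rewrite exprn_gt0 // normr_gt0 subr_eq0.
by apply: contraNneq nrw => <-.
Qed.

(* Peeling one real factor off a real polynomial without root in [a, b]:
   either a real linear factor or a conjugate quadratic one. *)
Lemma real_poly_factor q a b :
  real_poly q -> (1 < size q)%N -> a \is Num.real -> b \is Num.real -> a <= b ->
  (forall x, a <= x -> x <= b -> ~~ root q x) ->
  exists q' h, [/\ q = q' * h, real_poly q', (size q' < size q)%N
                 & 0 < h.[a] * h.[b]].
Proof.
move=> rq sq ra rb ab noroot.
have [w qw] := closed_rootP q (negbT (gtn_eqF sq)).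
have [q1 Eq1] := factor_theorem q w qw.
have Xw0 : 'X - w%:P != 0 by rewrite polyXsubC_eq0.
have q1n0 : q1 != 0.
  by apply: contraTneq sq => q10; rewrite Eq1 q10 mul0r size_poly0.
have szq1 : size q = (size q1).+1 by rewrite Eq1 size_mul // size_XsubC addn2.
have [rw|nrw] := boolP (w \is Num.real).
  exists q1, ('X - w%:P); split; rewrite ?szq1 //.
    by apply: real_poly_divl Xw0; [rewrite -Eq1 | apply: real_poly_XsubC].
  rewrite !hornerXsubC; apply: linear_factor_sign => // x ax xb.
  by apply: contraNneq (noroot x ax xb) => ->.
have q1w' : root q1 w^*.
  have : root q w^* by rewrite /root -{1}rq horner_map /= (rootP qw) conjC0.
  by rewrite Eq1 rootM root_XsubC -CrealE (negbTE nrw) orbF.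
have [q2 Eq2] := factor_theorem q1 w^* q1w'.
set h := ('X - w^*%:P) * ('X - w%:P).
have hn0 : h != 0 by rewrite mulf_neq0 ?polyXsubC_eq0.
have Eqh : q = q2 * h by rewrite Eq1 Eq2 mulrA.
exists q2, h; split => //.
- apply: real_poly_divl hn0; first by rewrite -Eqh.
  by rewrite /real_poly rmorphM /= !map_polyXsubC /= conjCK mulrC.
- have q2n0 : q2 != 0 by apply: contra_neq q1n0 => q20; rewrite Eq2 q20 mul0r.
  by rewrite szq1 Eq2 size_mul ?polyXsubC_eq0 // size_XsubC addn2 ltnS.
- by rewrite !hornerM !hornerXsubC mulr_gt0 // conj_pair_gt0.
Qed.

Lemma real_poly_sign q a b :
  real_poly q -> q != 0 -> a \is Num.real -> b \is Num.real -> a <= b ->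
  (forall x, a <= x -> x <= b -> ~~ root q x) -> 0 < q.[a] * q.[b].
Proof.
move=> + + ra rb ab; have [k] := ubnP (size q); elim: k q => // k IH q szq rq qn0.
move=> noroot; have [sq1|sq] := leqP (size q) 1.
  have Eq := size1_polyC sq1; rewrite Eq !hornerC sqr_real_gt0 //.
    by rewrite -[q`_0](hornerC _ 0) -Eq real_poly_horner ?real0.
  by apply: contra_neq qn0 => q00; rewrite Eq q00.
have [q' [h [Eq rq' sq' hab]]] := real_poly_factor rq sq ra rb ab noroot.
have q'n0 : q' != 0 by apply: contra_neq qn0 => q'0; rewrite Eq q'0 mul0r.
rewrite Eq !hornerM mulrACA mulr_gt0 // IH // ?(leq_trans sq') // => x ax xb.
by apply: contra (noroot x ax xb); rewrite Eq rootM => ->.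
Qed.

Lemma real_poly_sign_ge q a b :
  real_poly q -> q != 0 -> a \is Num.real -> b \is Num.real -> a <= b ->
  (forall x, a < x -> x <= b -> ~~ root q x) -> 0 <= q.[a] * q.[b].
Proof.
move=> rq qn0 ra rb ab noroot.
have [->|qa0] := eqVneq q.[a] 0; first by rewrite mul0r.
apply/ltW/real_poly_sign => // x ax xb.
have [<-|xa] := eqVneq a x; first by rewrite /root qa0.
by apply: noroot xb; rewrite lt_def eq_sym xa.
Qed.

End RealPolynomials.

Lemma last_root (C : numClosedFieldType) (q : {poly C}) (a c : C) :
  q != 0 -> a \is Num.real -> c \is Num.real -> a <= c ->
  exists s, [/\ s \is Num.real, a <= s, s <= c, s = a \/ root q s &
                forall x, s < x -> x <= c -> ~~ root q x].
Proof.
move=> qn0 ra rc ac; have [r Er] := closed_field_poly_normal q.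
have rootq x : root q x = (x \in r).
  by rewrite {1}Er rootZ ?lead_coef_eq0 // root_prod_XsubC.
set R := [seq x <- r | (x \is Num.real) && (a <= x) && (x <= c)].
have realR : all (mem Num.real) (a :: R).
  by rewrite /= ra; apply/allP => x; rewrite mem_filter => /andP[/andP[/andP[]]].
have [s sR smax] := seq_max realR isT.
have inR x : x \in R = [&& x \is Num.real, a <= x, x <= c & root q x].
  by rewrite mem_filter rootq !andbA.
have /and3P[rs a_le_s s_le_c] : [&& s \is Num.real, a <= s & s <= c].
  by move: sR; rewrite inE inR => /orP[/eqP->|/and4P[-> -> -> _]]; rewrite ?ra ?lexx.
exists s; split => //.
  by move: sR; rewrite inE inR => /orP[/eqP|/and4P[_ _ _]]; [left | right].
move=> x sx xc; apply/negP => qx.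
have ax : a <= x by apply: le_trans a_le_s (ltW sx).
have := smax x; rewrite inE inR qx xc ax (ger_real ax) ra orbT => /(_ isT).
by move=> /(lt_le_trans sx); rewrite ltxx.
Qed.

Section NonnegativeMatrices.
Variables (R : numFieldType) (n : nat).
Implicit Types (A : 'M[R]_n) (u v : 'I_n -> R) (a s : R).

Definition mxv A v i : R := \sum_j A i j * v j.

Lemma mxvD A u v i : mxv A (fun j => u j + v j) i = mxv A u i + mxv A v i.
Proof. by rewrite /mxv -big_split; apply: eq_bigr => j _; rewrite mulrDr. Qed.

Lemma mxvBZ A u v a i :
  mxv A (fun j => u j - a * v j) i = mxv A u i - a * mxv A v i.
Proof.
by rewrite /mxv mulr_sumr -sumrB; apply: eq_bigr => j _; rewrite mulrBr mulrCA.
Qed.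

Lemma mxvZr A v a i : mxv A (fun j => v j * a) i = mxv A v i * a.
Proof. by rewrite /mxv mulr_suml; apply: eq_bigr => j _; rewrite mulrA. Qed.

Lemma mxv_ge0 A v i :
  (forall i j, 0 <= A i j) -> (forall j, 0 <= v j) -> 0 <= mxv A v i.
Proof. by move=> hA hv; apply: sumr_ge0 => j _; rewrite mulr_ge0. Qed.

Lemma supersolution_zero A u s i :
  (forall i j, 0 <= A i j) -> (forall j, 0 <= u j) -> u i = 0 ->
  s * u i - mxv A u i <= 0.
Proof. by move=> hA hu ->; rewrite mulr0 sub0r oppr_le0 mxv_ge0. Qed.

End NonnegativeMatrices.

Section CollatzWielandt.
Variables (R : numFieldType) (n : nat) (A : 'M[R]_n.+1).
Hypothesis hA : forall i j, 0 <= A i j.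
Implicit Types (u y : 'I_n.+1 -> R) (b s : R).

Lemma supersolution_pos y u s :
  (forall j, 0 < y j) -> (forall j, 0 < s * y j - mxv A y j) ->
  (forall j, u j \is Num.real) -> (forall j, 0 < s * u j - mxv A u j) ->
  forall j, 0 < u j.
Proof.
move=> hy hsy ru hsu.
have ry j : y j \is Num.real by apply: gtr0_real.
have [i imin] := @fin_min R n (fun j => u j / y j)
  (fun j => ltac:(by rewrite rpredM // rpredV)).
set th := u i / y i in imin.
have th_le j : th * y j <= u j by rewrite -ler_pdivlMr.
have rth : th \is Num.real by rewrite rpredM // rpredV.
have [th0|th_le0] := real_ltP (real0 R) rth.
  by move=> j; apply: lt_le_trans (th_le j); rewrite mulr_gt0.
exfalso; have w_ge0 j : 0 <= u j - th * y j by rewrite subr_ge0.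
have wi0 : u i - th * y i = 0 by rewrite /th divfK ?subrr ?gt_eqF.
have := supersolution_zero s hA w_ge0 wi0; rewrite mxvBZ.
have -> : s * (u i - th * y i) - (mxv A u i - th * mxv A y i) =
   (s * u i - mxv A u i) + (- th) * (s * y i - mxv A y i) by ring.
have pos : 0 < (s * u i - mxv A u i) + (- th) * (s * y i - mxv A y i).
  by rewrite ltr_pwDl // mulr_ge0 ?oppr_ge0 // ltW.
by move=> le0; have := lt_le_trans pos le0; rewrite ltxx.
Qed.

Lemma no_strict_subsolution y u b :
  (forall j, 0 < y j) -> (forall j, b * y j <= mxv A y j) ->
  (forall j, 0 < u j) -> exists i, b * u i <= mxv A u i.
Proof.
move=> hy hby hu.
have [i imin] := @fin_min R n (fun j => u j / y j)
  (fun j => ltac:(by apply: gtr0_real; rewrite divr_gt0)).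
set th := u i / y i in imin.
have th0 : 0 < th by rewrite divr_gt0.
have ui : u i = th * y i by rewrite /th divfK // gt_eqF.
exists i; apply: (le_trans (y := th * mxv A y i)).
  by rewrite ui mulrCA ler_wpM2l // ltW.
rewrite -subr_ge0 -mxvBZ mxv_ge0 // => j.
by rewrite subr_ge0 -ler_pdivlMr.
Qed.

Lemma dominating_shift y b :
  (forall j, 0 < y j) -> b \is Num.real ->
  exists s0, [/\ s0 \is Num.real, b <= s0 & forall j, 0 < s0 * y j - mxv A y j].
Proof.
move=> hy rb; set t := \sum_i mxv A y i / y i.
have ti_ge0 i : 0 <= mxv A y i / y i.
  by rewrite divr_ge0 ?mxv_ge0 // => [j|]; apply: ltW.
have t_ge0 : 0 <= t by rewrite sumr_ge0.
exists (`|b| + 1 + t); split.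
- by rewrite !rpredD ?normr_real ?real1 ?ger0_real.
- by rewrite (le_trans (real_ler_norm rb)) // -addrA lerDl addr_ge0.
move=> j; rewrite subr_gt0 -ltr_pdivrMr // (le_lt_trans (y := t)) //.
  by rewrite /t (bigD1 j) //= lerDl sumr_ge0.
by rewrite addrC ltr_pwDr // ltr_pwDr ?normr_ge0.
Qed.

End CollatzWielandt.

Section Resolvent.
Variables (C : numClosedFieldType) (n : nat) (A : 'M[C]_n).

Lemma horner_char_poly_mx s :
  map_mx (horner_eval s) (char_poly_mx A) = s%:M - A.
Proof.
apply/matrixP => i j; rewrite !mxE /= horner_evalE.
by rewrite hornerD hornerN hornerMn hornerX hornerC.
Qed.

Lemma horner_char_poly s : (char_poly A).[s] = \det (s%:M - A).
Proof. by rewrite /char_poly -horner_char_poly_mx det_map_mx. Qed.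

Lemma root_char_poly z : root (char_poly A) z = (z \in eigenvalues_seq A).
Proof.
rewrite /eigenvalues_seq; case: (closed_field_poly_normal _) => r /= Er.
by rewrite {1}Er (monicP (char_poly_monic A)) scale1r root_prod_XsubC.
Qed.

(* The polynomial vector adj(X I - A) y, whose value at s solves
   (s I - A) x = det(s I - A) y. *)
Definition resolvent (y : 'I_n -> C) (i : 'I_n) : {poly C} :=
  \sum_j (\adj (char_poly_mx A)) i j * (y j)%:P.

Lemma horner_resolvent y s i :
  (resolvent y i).[s] = \sum_j \adj (s%:M - A) i j * y j.
Proof.
rewrite -horner_char_poly_mx /resolvent horner_sum; apply: eq_bigr => j _.
by rewrite hornerM hornerC -map_mx_adj !mxE.
Qed.

Lemma resolvent_eq y s i :
  s * (resolvent y i).[s] - mxv A (fun k => (resolvent y k).[s]) i =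
  (char_poly A).[s] * y i.
Proof.
set B := s%:M - A; rewrite horner_char_poly -/B.
have -> : s * (resolvent y i).[s] - mxv A (fun k => (resolvent y k).[s]) i =
          \sum_k B i k * (resolvent y k).[s].
  rewrite /mxv (bigD1 i) //= [X in _ = X](bigD1 i) //= !mxE eqxx mulr1n.
  rewrite mulrBl opprD addrA; congr (_ + _); rewrite -sumrN.
  by apply: eq_bigr => k ki; rewrite !mxE eq_sym (negbTE ki) mulr0n sub0r mulNr.
transitivity (\sum_j (B *m \adj B) i j * y j).
  under eq_bigr => k _ do rewrite horner_resolvent mulr_sumr.
  rewrite exchange_big /=; apply: eq_bigr => j _; rewrite mxE mulr_suml.
  by apply: eq_bigr => k _; rewrite mulrA.
rewrite mul_mx_adj (bigD1 i) //= big1 ?addr0 => [|j ji]; rewrite !mxE ?eqxx //.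
by rewrite eq_sym (negbTE ji) mulr0n mul0r.
Qed.

Hypothesis rA : forall i j, A i j \is Num.real.

Lemma conj_real_mx : map_mx conjC A = A.
Proof. by apply/matrixP => i j; rewrite mxE conj_Creal. Qed.

Lemma real_poly_char_poly : real_poly (char_poly A).
Proof. by rewrite /real_poly map_char_poly conj_real_mx. Qed.

Lemma real_poly_resolvent y i :
  (forall j, y j \is Num.real) -> real_poly (resolvent y i).
Proof.
move=> ry; rewrite /real_poly /resolvent rmorph_sum /=; apply: eq_bigr => j _.
rewrite rmorphM /= map_polyC /= conj_Creal //; congr (_ * _).
have E := map_mx_adj (map_poly conjC) (char_poly_mx A).
by rewrite map_char_poly_mx conj_real_mx in E; rewrite -{2}E [RHS]mxE.
Qed.

End Resolvent.

Section RealEigenvalue.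
Variables (C : numClosedFieldType) (n : nat) (A : 'M[C]_n.+1).
Hypothesis hA : nonneg_mx A.

(* Otherwise the positive solution u of
   (s I - A) u = y, continued from a large s down to b, would stay positive
   (it cannot cross zero) and contradict no_strict_subsolution at s = b. *)
Lemma real_eigenvalue_ge y b :
  (forall i, 0 < y i) -> b \is Num.real -> (forall i, b * y i <= mxv A y i) ->
  exists l, [/\ l \is Num.real, b <= l & root (char_poly A) l].
Proof.
move=> hy rb hby; set p := char_poly A.
have [/hasP[l]|noeig] := boolP (has (fun l => (l \is Num.real) && (b <= l))
                                    (eigenvalues_seq A)).
  by rewrite -root_char_poly => pl /andP[rl bl]; exists l.
exfalso; have p_noroot x : b <= x -> ~~ root p x.
  move=> bx; apply: contra noeig => px; apply/hasP; exists x.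
    by rewrite -root_char_poly.
  by rewrite bx (ger_real bx) rb.
have rA i j : A i j \is Num.real by apply: ger0_real.
have ry j : y j \is Num.real by apply: gtr0_real.
have rp : real_poly p := real_poly_char_poly rA.
have pn0 : p != 0 := monic_neq0 (char_poly_monic A).
set N := resolvent A y; have rN k : real_poly (N k) := real_poly_resolvent rA k ry.
have [s0 [rs0 bs0 hs0]] := dominating_shift hA hy rb.
(* u s = N(s) p(s0) solves (s I - A) u = p(s) p(s0) y, and is positive at s0. *)
set u := fun s k => (N k).[s] * p.[s0].
have uE s k : s * u s k - mxv A (u s) k = (p.[s] * p.[s0]) * y k.
  by rewrite /u mxvZr mulrA -mulrBl resolvent_eq mulrAC.
have u_s0 k : 0 < u s0 k.
  apply: (supersolution_pos hA hy hs0) => j.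
    by rewrite rpredM ?real_poly_horner.
  by rewrite uE mulr_gt0 // sqr_real_gt0 ?real_poly_horner ?p_noroot.
have Nn0 k : N k != 0.
  by apply: contraTneq (u_s0 k) => Nk0; rewrite /u Nk0 horner0 mul0r ltxx.
(* Follow u down to the last root s1 >= b of the polynomials N k. *)
have Qn0 : \prod_k N k != 0 by apply/prodf_neq0 => k _.
have [s1 [rs1 bs1 s1s0 s1_cases N_noroot]] := last_root Qn0 rb rs0 bs0.
have ps1 : 0 < p.[s1] * p.[s0].
  by apply: real_poly_sign => // x s1x _; apply/p_noroot/(le_trans bs1).
have u_s1_ge0 k : 0 <= u s1 k.
  apply: (sign_transfer _ _ (u_s0 k)); first by rewrite real_poly_horner.
  apply: real_poly_sign_ge => // x s1x xs0; apply: contra (N_noroot x s1x xs0).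
  by rewrite /root horner_prod => /eqP Nkx; rewrite (bigD1 k) //= Nkx mul0r.
have u_s1 k : 0 < u s1 k.
  rewrite lt_def u_s1_ge0 andbT; apply/eqP => uk0.
  have := supersolution_zero s1 hA u_s1_ge0 uk0; rewrite uE.
  by move=> /(lt_le_trans (mulr_gt0 ps1 (hy k))); rewrite ltxx.
(* Either s1 = b, where u contradicts Collatz-Wielandt, or s1 is a root of
   some N l, i.e. a zero coordinate of the positive u. *)
case: s1_cases => [s1b|].
  have [i] := no_strict_subsolution hA hy hby u_s1; rewrite -subr_ge0 -s1b.
  rewrite -opprB uE oppr_ge0 => /(lt_le_trans (mulr_gt0 ps1 (hy i))).
  by rewrite ltxx.
rewrite /root horner_prod => /prodf_eq0[l _ /eqP Nl0].
by have := u_s1 l; rewrite /u Nl0 mul0r ltxx.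
Qed.

End RealEigenvalue.

Section SpectralRadius.
Variables (C : numClosedFieldType) (n : nat).

Lemma root_le_spectral_radius (A : 'M[C]_n) z :
  root (char_poly A) z -> `|z| <= spectral_radius A.
Proof.
rewrite root_char_poly /spectral_radius; elim: (eigenvalues_seq A) => // a s IH.
have big_ge0 : 0 <= \big[Num.max/0]_(x <- s) `|x|.
  elim: s {IH} => [|b s IHs]; rewrite ?big_nil // big_cons.
  by rewrite comparable_le_max ?real_comparable ?normr_real ?ger0_real // IHs orbT.
rewrite inE big_cons comparable_le_max ?real_comparable ?normr_real ?ger0_real //.
by case/orP => [/eqP->|/IH->]; rewrite ?lexx ?orbT.
Qed.

Lemma spectral_radius_le (A : 'M[C]_n) mu :
  0 <= mu -> (forall z, root (char_poly A) z -> `|z| <= mu) ->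
  spectral_radius A <= mu.
Proof.
move=> mu0 H; rewrite /spectral_radius big_seq; apply: bigmax_le => // z zs.
by apply: H; rewrite root_char_poly.
Qed.

End SpectralRadius.

Lemma eigenvalue_norm_le (C : numClosedFieldType) n (A : 'M[C]_n.+1) y mu z :
  nonneg_mx A -> (forall i, 0 < y i) ->
  (forall i, mxv A y i <= mu * y i) -> root (char_poly A) z -> `|z| <= mu.
Proof.
move=> hA hy hmu.
have -> : char_poly A = char_poly A^T.
  by rewrite /char_poly -det_tr; congr (\det _); apply/matrixP => i j;
     rewrite !mxE eq_sym.
rewrite -eigenvalue_root_char => /eigenvalueP [v Av vn0].
have Ev j : \sum_i A j i * v 0 i = z * v 0 j.
  have := congr1 (fun M : 'M[C]_(1, n.+1) => M 0 j) Av; rewrite !mxE => <-.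
  by apply: eq_bigr => i _; rewrite mxE mulrC.
have [i imax] := @fin_max C n (fun j => `|v 0 j| / y j)
  (fun j => ltac:(by rewrite rpredM ?normr_real // rpredV gtr0_real)).
set w := `|v 0 i| / y i in imax.
have v_le j : `|v 0 j| <= w * y j by rewrite -ler_pdivrMr.
have vi0 : 0 < `|v 0 i|.
  rewrite lt_def normr_ge0 andbT normr_eq0; apply: contraNneq vn0 => vi.
  apply/eqP/matrixP => a j; rewrite ord1 !mxE; apply/eqP; rewrite -normr_le0.
  by rewrite (le_trans (v_le j)) // /w vi normr0 !mul0r.
have w0 : 0 <= w by rewrite divr_ge0 // ltW.
rewrite -(ler_pM2r vi0); apply: (le_trans (y := w * mxv A y i)).
  rewrite -normrM -Ev; apply: (le_trans (ler_norm_sum _ _ _)).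
  rewrite /mxv mulr_sumr; apply: ler_sum => j _.
  by rewrite normrM ger0_norm // mulrCA ler_wpM2l.
by rewrite (le_trans (ler_wpM2l w0 (hmu i))) // /w mulrCA divfK ?gt_eqF.
Qed.

Section Irreducible.
Variables (C : numClosedFieldType) (n : nat) (A : 'M[C]_n.+1).
Hypotheses (hA : nonneg_mx A) (irrA : irreducible_mx A).
Implicit Types (v : 'I_n.+1 -> C).

Definition stepIA v i : C := v i + mxv A v i.

Lemma stepIA_ge v : (forall j, 0 <= v j) -> forall i, v i <= stepIA v i.
Proof. by move=> hv i; rewrite lerDl mxv_ge0. Qed.

Lemma iter_stepIA_ge v k : (forall j, 0 <= v j) ->
  forall i, v i <= iter k stepIA v i.
Proof.
move=> hv; elim: k => [|k IH] i //=; apply: (le_trans (IH i)).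
by apply: stepIA_ge => j; apply: le_trans (hv j) (IH j).
Qed.

Lemma iter_stepIA_comm v b k i :
  mxv A (iter k stepIA v) i - b * iter k stepIA v i =
  iter k stepIA (fun j => mxv A v j - b * v j) i.
Proof.
elim: k i => [|k IH] i //=; set X := iter k stepIA v.
transitivity (stepIA (fun j => mxv A X j - b * X j) i).
  by rewrite /stepIA (mxvD A X (mxv A X)) (mxvBZ A (mxv A X) X b); ring.
rewrite /stepIA IH; congr (_ + _).
by apply: eq_bigr => j _; rewrite IH.
Qed.

Lemma stepIA_support v : (forall j, 0 <= v j) -> [set i | 0 < v i] != set0 ->
  (minn #|[set i | (0 < v i)%R]|.+1 n.+1 <=
   #|[set i | (0 < stepIA v i)%R]|)%N.
Proof.
move=> hv; set S := [set i | 0 < v i] => Sn0.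
have subS : S \subset [set i | 0 < stepIA v i].
  by apply/subsetP => i; rewrite !inE => vi; apply: lt_le_trans (stepIA_ge hv i).
have [ST|SnT] := eqVneq S setT.
  have -> : [set i | 0 < stepIA v i] = setT.
    by apply/eqP; rewrite eqEsubset subsetT -ST subS.
  by rewrite cardsT card_ord geq_minr.
have [||i [j [iS jS Aij]]] := @irrA (~: S).
- by rewrite -[set0]setCK setC0 (inj_eq (@setC_inj _)).
- by rewrite -setC0 (inj_eq (@setC_inj _)).
move: iS jS; rewrite !inE negbK => iS jS.
have i_step : 0 < stepIA v i.
  apply: (lt_le_trans (y := A i j * v j)).
    by rewrite mulr_gt0 // lt_def Aij hA.
  rewrite /stepIA /mxv (bigD1 j) //= addrCA lerDl addr_ge0 ?sumr_ge0 // => k _.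
  by rewrite mulr_ge0.
rewrite geq_min (leq_trans _ (subset_leq_card (_ : i |: S \subset _))) //.
  by rewrite cardsU1 inE (negbTE iS).
by rewrite subUset sub1set inE i_step subS.
Qed.

Lemma iter_stepIA_pos d : (forall j, 0 <= d j) -> (exists i, 0 < d i) ->
  forall i, 0 < iter n stepIA d i.
Proof.
move=> hd [i0 di0].
have ge0 k j : 0 <= iter k stepIA d j := le_trans (hd j) (iter_stepIA_ge k hd j).
have card_supp k :
    (k <= n)%N -> (k < #|[set i | (0 < iter k stepIA d i)%R]|)%N.
  elim: k => [|k IH] kn.
    by rewrite card_gt0; apply/set0Pn; exists i0; rewrite inE.
  have IHk := IH (ltnW kn).
  have Sn0 : [set i | 0 < iter k stepIA d i] != set0.
    by rewrite -card_gt0 (leq_trans _ IHk).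
  apply: leq_trans (stepIA_support (ge0 k) Sn0).
  by rewrite leq_min ltnS IHk ltnS.
move=> i; have : [set i | 0 < iter n stepIA d i] == setT.
  by rewrite eqEcard subsetT cardsT card_ord card_supp.
by move/eqP/setP/(_ i); rewrite !inE.
Qed.

Lemma real_eigenvalue_gt y b :
  (forall i, 0 < y i) -> b \is Num.real ->
  (forall i, b * y i <= mxv A y i) -> (exists i, b * y i < mxv A y i) ->
  exists l, [/\ l \is Num.real, b < l & root (char_poly A) l].
Proof.
move=> hy rb hby [i0 hi0]; set y' := iter n stepIA y.
have y'_pos j : 0 < y' j.
  by apply: lt_le_trans (hy j) (iter_stepIA_ge _ _ j) => k; apply: ltW.
have defect_pos j : 0 < mxv A y' j - b * y' j.
  rewrite iter_stepIA_comm iter_stepIA_pos // => [k|]; first by rewrite subr_ge0.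
  by exists i0; rewrite subr_gt0.
have [i imin] := @fin_min C n (fun j => (mxv A y' j - b * y' j) / y' j)
  (fun j => ltac:(by apply: gtr0_real; rewrite divr_gt0)).
set e := (mxv A y' i - b * y' i) / y' i in imin.
have e_pos : 0 < e by rewrite divr_gt0.
have hby' j : (b + e) * y' j <= mxv A y' j.
  by rewrite mulrDl addrC -lerBrDr -ler_pdivlMr.
have [l [rl bl rootl]] :=
  real_eigenvalue_ge hA y'_pos (rpredD rb (gtr0_real e_pos)) hby'.
by exists l; split => //; apply: lt_le_trans bl; rewrite ltrDl.
Qed.

End Irreducible.

Lemma bound_root (C : numClosedFieldType) (Mn S T Sg : C) :
  let beta := (Mn + S - T + sqrtC ((Mn - S + T) ^+ 2 + 4 * T * Sg)) / 2 in
  T * Sg = (beta - Mn) * (beta - S + T).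
Proof.
rewrite /=; have E := sqrtCK ((Mn - S + T) ^+ 2 + 4 * T * Sg).
set sD := sqrtC _ in E *.
have -> : ((Mn + S - T + sD) / 2 - Mn) * ((Mn + S - T + sD) / 2 - S + T) =
          (sD ^+ 2 - (Mn - S + T) ^+ 2) / 4 by field.
by rewrite E; field.
Qed.

Section Theorem2.
Variables (C : numClosedFieldType) (m : nat) (A : 'M[C]_(m.+2)).
Variables (c : 'I_(m.+2) -> C) (S T : C).
Hypotheses (hA : nonneg_mx A) (irrA : irreducible_mx A) (hc : forall i, 0 < c i).
Hypotheses (hS : forall i, S <= A i i).
Hypotheses (hT_at : exists i j, i != j /\ T = A i j * c j / c i).
Hypotheses (hT : forall i j, i != j -> T <= A i j * c j / c i).
Hypothesis hM : forall i j : 'I_(m.+2), (i <= j)%N -> Mrow A c j <= Mrow A c i.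

Local Notation M := (Mrow A c).
Local Notation Mn := (M ord_max).

(* The similarity-scaled entries b_ij = a_ij c_j / c_i of D^-1 A D. *)
Definition scaled i j : C := A i j * c j / c i.
Definition floor_mx (i j : 'I_(m.+2)) : C := if j == i then S else T.
Definition excess j : C := M j - Mn.
Definition excess_sum : C := \sum_(k < m.+2 | (k < m.+1)%N) excess k.

Lemma scaled_ge0 i j : 0 <= scaled i j.
Proof. by rewrite divr_ge0 ?mulr_ge0 // ltW. Qed.

Lemma Mrow_scaled i : M i = \sum_j scaled i j.
Proof. by rewrite /Mrow mulr_suml. Qed.

Lemma floor_le_scaled i j : floor_mx i j <= scaled i j.
Proof.
rewrite /floor_mx; case: eqP => [->|/eqP ji]; last by rewrite hT // eq_sym.
by rewrite /scaled mulfK ?gt_eqF.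
Qed.

Lemma excess_ge0 j : 0 <= excess j.
Proof. by rewrite subr_ge0 hM // -ltnS. Qed.

Lemma sum_excess : \sum_j excess j = excess_sum.
Proof.
rewrite (bigD1 ord_max) //= {1}/excess subrr add0r; apply: eq_bigl => k.
by rewrite -(inj_eq val_inj) /= ltn_neqAle -ltnS ltn_ord andbT.
Qed.

Lemma T_ge0 : 0 <= T.
Proof. by case: hT_at => i [j [_ ->]]; apply: scaled_ge0. Qed.

(* Irreducibility forces the last row to leave the diagonal: M_n > S - T. *)
Lemma diag_gap_pos : 0 < Mn - S + T.
Proof.
have [||i [j [iI jI Aij]]] := @irrA [set ord_max].
- by apply/set0Pn; exists ord_max; rewrite inE.
- by rewrite eqEcard subsetT cardsT card_ord cards1.
move: iI jI; rewrite !inE => /eqP iE jn; subst i.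
rewrite ltr_wpDr ?T_ge0 // subr_gt0 Mrow_scaled (bigD1 ord_max) //=.
rewrite {1}/scaled mulfK ?gt_eqF // ltr_pwDr ?hS //.
apply: (lt_le_trans (y := scaled ord_max j)).
  by rewrite divr_gt0 // mulr_gt0 // lt_def Aij hA.
by rewrite (bigD1 j) //= lerDl sumr_ge0 // => k _; apply: scaled_ge0.
Qed.

Lemma Mrow_ge0 i : 0 <= M i.
Proof. by rewrite Mrow_scaled sumr_ge0 // => j _; apply: scaled_ge0. Qed.

Lemma Mrow_real i : M i \is Num.real.
Proof. exact/ger0_real/Mrow_ge0. Qed.

Lemma S_real : S \is Num.real.
Proof. by rewrite (ler_real (hS ord0)) ger0_real. Qed.

Lemma T_real : T \is Num.real.
Proof. exact/ger0_real/T_ge0. Qed.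

Definition bound : C :=
  (Mn + S - T + sqrtC ((Mn - S + T) ^+ 2 + 4 * T * excess_sum)) / 2.
Definition gap : C := bound - S + T.

Lemma bound_identity : T * excess_sum = (bound - Mn) * gap.
Proof. exact: bound_root. Qed.

Lemma gap_pos : 0 < gap.
Proof.
have x_real : Mn - S + T \is Num.real.
  by rewrite rpredD ?rpredB ?Mrow_real ?S_real ?T_real.
have sD_ge0 : 0 <= sqrtC ((Mn - S + T) ^+ 2 + 4 * T * excess_sum).
  have sq_ge0 : 0 <= (Mn - S + T) ^+ 2 by rewrite -(real_normK x_real) exprn_ge0.
  rewrite sqrtC_ge0 addr_ge0 // !mulr_ge0 ?T_ge0 ?ler0n //.
  by rewrite -sum_excess sumr_ge0 // => j _; apply: excess_ge0.
have -> : gap = (Mn - S + T + sqrtC ((Mn - S + T) ^+ 2 + 4 * T * excess_sum)) / 2.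
  by rewrite /gap /bound; field.
by rewrite divr_gt0 // ltr_wpDr // diag_gap_pos.
Qed.

Lemma bound_real : bound \is Num.real.
Proof.
have -> : bound = gap + S - T by rewrite /gap; ring.
by apply/rpredB/T_real/rpredD/S_real/gtr0_real/gap_pos.
Qed.

(* Since g > 0 and T sum_j d_j >= 0, beta >= M_n (>= 0). *)
Lemma bound_ge_Mn : Mn <= bound.
Proof.
have : 0 <= (bound - Mn) * gap.
  rewrite -bound_identity mulr_ge0 ?T_ge0 // -sum_excess sumr_ge0 // => j _.
  exact: excess_ge0.
by rewrite pmulr_lge0 ?gap_pos // subr_ge0.
Qed.

Definition test_vec j : C := c j * (1 + excess j / gap).

Lemma test_vec_pos j : 0 < test_vec j.
Proof. by rewrite mulr_gt0 // ltr_wpDr ?divr_ge0 ?excess_ge0 ?ltW ?gap_pos. Qed.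

Lemma defect_eq i :
  mxv A test_vec i - bound * test_vec i =
  c i / gap * \sum_j (scaled i j - floor_mx i j) * excess j.
Proof.
have gap0 : gap != 0 by rewrite gt_eqF ?gap_pos.
have Ay : mxv A test_vec i = c i * (M i + (\sum_j scaled i j * excess j) / gap).
  rewrite Mrow_scaled mulr_suml -big_split /= mulr_sumr; apply: eq_bigr => j _.
  by rewrite /test_vec /scaled mulrA; field; rewrite gap0 gt_eqF.
have floor_sum : \sum_j floor_mx i j * excess j =
                 S * excess i + T * (excess_sum - excess i).
  rewrite -sum_excess [X in _ = _ + T * (X - _)](bigD1 i) //= (addrC (excess i)).
  rewrite addrK (bigD1 i) //= /floor_mx eqxx mulr_sumr; congr (_ + _).
  by apply: eq_bigr => j /negbTE ->.
have beta_eq : T * (excess_sum - excess i) = (bound - Mn) * gap - T * excess i.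
  by rewrite mulrBr bound_identity.
have split_sum : \sum_j (scaled i j - floor_mx i j) * excess j =
    \sum_j scaled i j * excess j - \sum_j floor_mx i j * excess j.
  by rewrite -sumrB; apply: eq_bigr => j _; rewrite mulrBl.
rewrite Ay split_sum floor_sum beta_eq /test_vec /excess.
by move: gap0; rewrite /gap => gap0; field.
Qed.

Lemma defect_term_ge0 i j : 0 <= (scaled i j - floor_mx i j) * excess j.
Proof. by rewrite mulr_ge0 ?excess_ge0 // subr_ge0 floor_le_scaled. Qed.

Lemma bound_test_vec i : bound * test_vec i <= mxv A test_vec i.
Proof.
rewrite -subr_ge0 defect_eq mulr_ge0 ?sumr_ge0 // => [|j _].
  by rewrite divr_ge0 ?ltW ?gap_pos.
exact: defect_term_ge0.
Qed.

Lemma bound_le_spectral_radius : bound <= spectral_radius A.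
Proof.
have [l [rl bl rootl]] :=
  real_eigenvalue_ge hA test_vec_pos bound_real bound_test_vec.
apply: le_trans bl (le_trans (real_ler_norm rl) _).
exact: root_le_spectral_radius.
Qed.

Definition tight : Prop :=
  forall i j, (scaled i j - floor_mx i j) * excess j = 0.

Definition staircase : Prop :=
  (forall i j, M i = M j) \/
  (0 < T /\
   exists t : 'I_(m.+2), [/\ (1 <= t)%N,
     (forall k : 'I_(m.+2), (k < t)%N -> A k k = S),
     (forall k l : 'I_(m.+2), (l < t)%N -> k != l -> A k l * c l / c k = T) &
     (forall k : 'I_(m.+2), (t <= k)%N -> M k = M t)]).

(* rho(A) = beta exactly when the test vector is an eigenvector, i.e. when
   every defect term vanishes. *)
Lemma spectral_radius_eq_bound : spectral_radius A = bound <-> tight.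
Proof.
split => [rho_eq i j|tightA].
  have defect0 i' : mxv A test_vec i' - bound * test_vec i' = 0.
    apply/eqP; apply: contraT => nz.
    have [|l [rl bl rootl]] :=
      real_eigenvalue_gt hA irrA test_vec_pos bound_real bound_test_vec.
      by exists i'; rewrite lt_def -subr_eq0 nz bound_test_vec.
    have := le_trans (real_ler_norm rl) (root_le_spectral_radius rootl).
    by rewrite rho_eq => /(lt_le_trans bl); rewrite ltxx.
  move: (defect0 i); rewrite defect_eq => /eqP; rewrite mulf_eq0 mulf_eq0.
  rewrite invr_eq0 (gt_eqF gap_pos) (gt_eqF (hc i)) /= => /eqP/psumr_eq0P -> //.
  by move=> k _; apply: defect_term_ge0.
apply/le_anti; rewrite bound_le_spectral_radius andbT.
apply: spectral_radius_le => [|z]; first exact: le_trans (Mrow_ge0 _) bound_ge_Mn.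
apply: (eigenvalue_norm_le hA test_vec_pos) => i.
suff -> : mxv A test_vec i = bound * test_vec i by [].
by apply/eqP; rewrite -subr_eq0 defect_eq big1 ?mulr0 // => j _; apply: tightA.
Qed.

Lemma tight_column j :
  tight -> excess j != 0 -> forall i, scaled i j = floor_mx i j.
Proof.
move=> tightA dj i; have /eqP := tightA i j.
by rewrite mulf_eq0 (negbTE dj) orbF subr_eq0 => /eqP.
Qed.

(* A tight column with nonzero excess has all its off-diagonal entries equal
   to T, so irreducibility forces T > 0. *)
Lemma tight_T_pos j : tight -> excess j != 0 -> 0 < T.
Proof.
move=> tightA dj; have [||i [l [iI lI Ail]]] := @irrA (~: [set j]).
- by rewrite -card_gt0 cardsC1 card_ord.
- by apply/eqP => /setP/(_ j); rewrite !inE eqxx.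
move: iI lI; rewrite !inE negbK => ij /eqP lj; subst l.
have := tight_column tightA dj i; rewrite /floor_mx eq_sym (negbTE ij) => <-.
by rewrite divr_gt0 // mulr_gt0 // lt_def Ail hA.
Qed.

(* Tightness gives the equality pattern, with t the first index such that
   M_t = M_n. *)
Lemma tight_staircase : tight -> staircase.
Proof.
move=> tightA; have [all_eq|] := boolP [forall j, M j == Mn].
  by left => i j; rewrite (eqP (forallP all_eq i)) (eqP (forallP all_eq j)).
rewrite negb_forall => /existsP[j0 Mj0].
have excess_neq0 j : (excess j != 0) = (M j != Mn) by rewrite subr_eq0.
right; split; first by apply: (@tight_T_pos j0 tightA); rewrite excess_neq0.
have [t Mt tmin] :=
  @arg_minnP _ ord_max (fun k => M k == Mn) (fun k => val k) (eqxx _).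
have below_t (k : 'I_(m.+2)) : (k < t)%N -> excess k != 0.
  by move=> kt; rewrite excess_neq0; apply: contraTN kt => /tmin; rewrite -leqNgt.
exists t; split.
- rewrite lt0n; apply: contra Mj0 => /eqP t0; rewrite eq_le -(eqP Mt).
  by rewrite hM ?t0 // (eqP Mt) -subr_ge0 excess_ge0.
- move=> k kt; have := tight_column tightA (below_t k kt) k.
  by rewrite /floor_mx eqxx /scaled mulfK ?gt_eqF.
- move=> k l lt kl; have := tight_column tightA (below_t l lt) k.
  by rewrite /floor_mx eq_sym (negbTE kl).
- move=> k tk; apply/le_anti; rewrite hM //= (eqP Mt) -subr_ge0.
  exact: excess_ge0.
Qed.

Lemma staircase_tight : staircase -> tight.
Proof.
case=> [all_eq|[_ [t [_ diagS offT Mconst]]]] i j.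
  by rewrite /excess (all_eq j ord_max) subrr mulr0.
have [jt|tj] := ltnP j t; last first.
  by rewrite /excess Mconst // (Mconst ord_max) ?leq_ord // subrr mulr0.
rewrite /floor_mx; have [<-|ji] := eqVneq j i.
  by rewrite /scaled mulfK ?gt_eqF // diagS // subrr mul0r.
by rewrite /scaled offT // 1?eq_sym // subrr mul0r.
Qed.
End Theorem2.

Theorem theorem2 (C : numClosedFieldType) (m : nat) (A : 'M[C]_(m.+2))
  (c : 'I_(m.+2) -> C) (S T : C) :
  nonneg_mx A -> irreducible_mx A ->
  (forall i, 0 < c i) ->
  (exists i, S = A i i) -> (forall i, S <= A i i) ->
  (exists i j, i != j /\ T = A i j * c j / c i) ->
  (forall i j, i != j -> T <= A i j * c j / c i) ->
  (forall i j : 'I_(m.+2), (i <= j)%N -> Mrow A c j <= Mrow A c i) ->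
  let M := Mrow A c in
  let Mn := M ord_max in
  let bound := (Mn + S - T +
        sqrtC ((Mn - S + T) ^+ 2 + 4 * T * \sum_(k < m.+2 | (k < m.+1)%N) (M k - Mn)))
        / 2 in
  bound <= spectral_radius A /\
  (spectral_radius A = bound <->
     ((forall i j, M i = M j) \/
      (0 < T /\
       exists t : 'I_(m.+2), [/\ (1 <= t)%N,
         (forall k : 'I_(m.+2), (k < t)%N -> A k k = S),
         (forall k l : 'I_(m.+2), (l < t)%N -> k != l -> A k l * c l / c k = T) &
         (forall k : 'I_(m.+2), (t <= k)%N -> M k = M t)]))).
Proof.
move=> hA irrA hc _ hS hT_at hT hM M Mn bound.
have rho_eq := spectral_radius_eq_bound hA irrA hc hS hT_at hT hM.
split; first exact: bound_le_spectral_radius hA irrA hc hS hT_at hT hM.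
split=> [/rho_eq/(tight_staircase hA irrA hc hM) //|].
by move/(staircase_tight hc)/rho_eq.
Qed.
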